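(* Let $V$ be a real sequence and suppose that for some $a>0$ the equation $(-\Delta+V)\psi=0$ has a solution $\psi^-$ with $n^a\psi^-_n\to1$ as $n\to\infty$. Then for any solution $\psi$ that is linearly independent of $\psi^-$, $|\psi^-_n\psi_n|\sim Cn$ for some constant $C>0$.
   Context: $(\Delta f)_n=f_{n+1}+f_{n-1}-2f_n$; $(-\Delta+V)\psi=0$ means $-\psi_{n+1}-\psi_{n-1}+(2+V_n)\psi_n=0$ for $n\ge1$. *)

From Stdlib Require Import Reals.
From Coquelicot Require Import Coquelicot.
Open Scope R_scope.

Definition dlap (f : nat -> R) (n : nat) : R :=
  f (S n) + f (Nat.pred n) - 2 * f n.

Definition is_solution (V psi : nat -> R) : Prop :=
  forall n : nat, (1 <= n)%nat -> - dlap psi n + V n * psi n = 0.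

Definition lin_indep (f g : nat -> R) : Prop :=
  forall a b : R, (forall n, a * f n + b * g n = 0) -> a = 0 /\ b = 0.

(* The Wronskian W = psi-_{n+1} psi_n - psi-_n psi_{n+1} is constant and nonzero, so
   u = psi / psi- satisfies u_{n+1} - u_n = -W / (psi-_n psi-_{n+1}) ~ -W n^(-2a).
   By Stolz-Cesaro against n^(2a+1), u_n ~ -W n^(2a+1) / (2a+1); multiplying by
   (psi-_n)^2 ~ n^(-2a) gives psi-_n psi_n ~ -W n / (2a+1), i.e. C = |W| / (2a+1). *)
From Stdlib Require Import Reals Lra Lia.
From Coquelicot Require Import Coquelicot.
Open Scope R_scope.

Lemma solution_rec V f n : is_solution V f ->
  f (S (S n)) = (2 + V (S n)) * f (S n) - f n.
Proof.
  intros Hf; specialize (Hf (S n) ltac:(lia)); unfold dlap in Hf; simpl in Hf; lra.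
Qed.

Lemma solution_lincomb_eq0 V f g al be : is_solution V f -> is_solution V g ->
  al * f 0%nat + be * g 0%nat = 0 -> al * f 1%nat + be * g 1%nat = 0 ->
  forall n, al * f n + be * g n = 0.
Proof.
  intros Hf Hg H0 H1.
  assert (Hpair : forall n, al * f n + be * g n = 0 /\ al * f (S n) + be * g (S n) = 0).
  { induction n as [|n [IH1 IH2]]; [auto|]; split; [exact IH2|].
    rewrite (solution_rec V f n Hf), (solution_rec V g n Hg).
    replace (al * ((2 + V (S n)) * f (S n) - f n) + be * ((2 + V (S n)) * g (S n) - g n))
      with ((2 + V (S n)) * (al * f (S n) + be * g (S n)) - (al * f n + be * g n)) by ring.
    rewrite IH1, IH2; ring. }
  intros n; apply Hpair.
Qed.

Definition wronskian (f g : nat -> R) (n : nat) : R := f (S n) * g n - f n * g (S n).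

Lemma wronskian_const V f g : is_solution V f -> is_solution V g ->
  forall n, wronskian f g n = wronskian f g 0.
Proof.
  intros Hf Hg; induction n as [|n IH]; [reflexivity|].
  rewrite <- IH; unfold wronskian.
  rewrite (solution_rec V f n Hf), (solution_rec V g n Hg); ring.
Qed.

Lemma wronskian_neq0 V f g : is_solution V f -> is_solution V g -> lin_indep f g ->
  wronskian f g 0 <> 0.
Proof.
  unfold wronskian; intros Hf Hg Hli HW.
  (* The combinations g_0 f - f_0 g and g_1 f - f_1 g have vanishing initial data. *)
  destruct (Hli (g 0%nat) (- f 0%nat)) as [Hg0 Hf0].
  { apply (solution_lincomb_eq0 V); auto; lra. }
  destruct (Hli (g 1%nat) (- f 1%nat)) as [Hg1 Hf1].
  { apply (solution_lincomb_eq0 V); auto; lra. }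
  destruct (Hli 1 0) as [H10 _]; [|lra].
  apply (solution_lincomb_eq0 V); auto; lra.
Qed.

Lemma telescoping_bound (A B : nat -> R) (L e : R) (M : nat) :
  (forall n, (M <= n)%nat ->
     Rabs ((A (S n) - A n) - L * (B (S n) - B n)) <= e * (B (S n) - B n)) ->
  forall n, (M <= n)%nat -> Rabs ((A n - A M) - L * (B n - B M)) <= e * (B n - B M).
Proof.
  intros Hstep n Hn.
  replace n with (n - M + M)%nat by lia.
  induction (n - M)%nat as [|k IH].
  - simpl; replace (A M - A M - L * (B M - B M)) with 0 by ring; rewrite Rabs_R0; lra.
  - replace (S k + M)%nat with (S (k + M)) by lia.
    specialize (Hstep (k + M)%nat ltac:(lia)).
    replace (A (S (k + M)) - A M - L * (B (S (k + M)) - B M)) with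
      ((A (S (k + M)) - A (k + M)%nat - L * (B (S (k + M)) - B (k + M)%nat)) +
       (A (k + M)%nat - A M - L * (B (k + M)%nat - B M))) by ring.
    eapply Rle_trans; [apply Rabs_triang | lra].
Qed.

Lemma stolz_cesaro (A B : nat -> R) (L : R) (N : nat) :
  (forall n, (N <= n)%nat -> B n < B (S n)) ->
  is_lim_seq B p_infty ->
  is_lim_seq (fun n => (A (S n) - A n) / (B (S n) - B n)) L ->
  is_lim_seq (fun n => A n / B n) L.
Proof.
  intros Hinc HB HL; apply is_lim_seq_spec in HB; apply is_lim_seq_spec in HL.
  apply is_lim_seq_spec; intros [eps Heps]; simpl.
  destruct (HL (mkposreal (eps / 2) ltac:(lra))) as [N1 HN1]; simpl in HN1.
  set (M := Nat.max N N1).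
  assert (Hsum : forall n, (M <= n)%nat ->
            Rabs ((A n - A M) - L * (B n - B M)) <= eps / 2 * (B n - B M)).
  { apply telescoping_bound; intros n Hn.
    assert (Hd : 0 < B (S n) - B n) by (specialize (Hinc n ltac:(lia)); lra).
    replace ((A (S n) - A n) - L * (B (S n) - B n)) with
      (((A (S n) - A n) / (B (S n) - B n) - L) * (B (S n) - B n)) by (field; lra).
    rewrite Rabs_mult, (Rabs_right (B (S n) - B n)) by lra.
    apply Rmult_le_compat_r; [lra | left; apply HN1; lia]. }
  set (K := Rabs (A M - L * B M) + eps / 2 * Rabs (B M)).
  destruct (HB (2 * K / eps)) as [N2 HN2].
  exists (Nat.max M N2); intros n Hn.
  specialize (HN2 n ltac:(lia)); specialize (Hsum n ltac:(lia)).
  assert (HK : 0 <= K) by (pose proof (Rabs_pos (A M - L * B M));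
                           pose proof (Rabs_pos (B M)); unfold K; nra).
  assert (HKB : K < eps / 2 * B n).
  { apply (Rmult_lt_compat_l (eps / 2)) in HN2; [|lra].
    replace (eps / 2 * (2 * K / eps)) with K in HN2 by (field; lra); exact HN2. }
  assert (HBn : 0 < B n) by nra.
  assert (HBM : - B M <= Rabs (B M)) by (rewrite <- Rabs_Ropp; apply Rle_abs).
  assert (Hmain : Rabs (A n - L * B n) < eps * B n).
  { replace (A n - L * B n) with ((A n - A M - L * (B n - B M)) + (A M - L * B M)) by ring.
    eapply Rle_lt_trans; [apply Rabs_triang|]; unfold K in HKB; nra. }
  replace (A n / B n - L) with ((A n - L * B n) / B n) by (field; lra).
  rewrite Rabs_div, (Rabs_right (B n)) by lra.
  apply Rlt_div_l; lra.
Qed.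

Lemma Rpower_1_l c : Rpower 1 c = 1.
Proof. unfold Rpower; rewrite ln_1, Rmult_0_r; apply exp_0. Qed.

Lemma Rpower_INR_S n c : (1 <= n)%nat ->
  Rpower (INR (S n)) c = Rpower (INR n) c * Rpower (1 + / INR n) c.
Proof.
  intros Hn; assert (0 < INR n) by (apply lt_0_INR; lia).
  assert (0 < / INR n) by (apply Rinv_0_lt_compat; lra).
  rewrite Rpower_mult_distr by lra; f_equal; rewrite S_INR; field; lra.
Qed.

Lemma Rpower_double_plus_1 x a : 0 < x ->
  Rpower x (2 * a + 1) = Rpower x a * Rpower x a * x.
Proof.
  intros Hx; replace (2 * a + 1) with (a + a + 1) by ring.
  rewrite !Rpower_plus, Rpower_1 by lra; ring.
Qed.

Lemma is_lim_seq_inv_INR : is_lim_seq (fun n => / INR n) 0.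
Proof. apply (is_lim_seq_inv INR p_infty); [apply is_lim_seq_INR | easy]. Qed.

(* The difference quotient of x |-> x^c at 1, sampled at step 1/n. *)
Lemma is_lim_seq_Rpower_diff_quot c :
  is_lim_seq (fun n => INR n * (Rpower (1 + / INR n) c - 1)) c.
Proof.
  pose proof (derivable_pt_lim_power 1 c Rlt_0_1) as Hd.
  rewrite Rpower_1_l, Rmult_1_r in Hd.
  pose proof is_lim_seq_inv_INR as Hi; apply is_lim_seq_spec in Hi.
  apply is_lim_seq_spec; intros eps.
  destruct (Hd eps (cond_pos eps)) as [delta Hdel].
  destruct (Hi delta) as [N HN].
  exists (Nat.max N 1); intros n Hn.
  specialize (HN n ltac:(lia)); rewrite Rminus_0_r in HN.
  assert (Hpos : 0 < INR n) by (apply lt_0_INR; lia).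
  assert (Hh : / INR n <> 0) by (apply Rinv_neq_0_compat; lra).
  specialize (Hdel (/ INR n) Hh HN); rewrite Rpower_1_l in Hdel.
  replace (INR n * (Rpower (1 + / INR n) c - 1)) with
    ((Rpower (1 + / INR n) c - 1) / / INR n) by (field; lra).
  exact Hdel.
Qed.

Lemma is_lim_seq_Rpower_1_plus_inv c : is_lim_seq (fun n => Rpower (1 + / INR n) c) 1.
Proof.
  assert (H := is_lim_seq_mult' _ _ _ _ (is_lim_seq_Rpower_diff_quot c) is_lim_seq_inv_INR).
  assert (H1 := is_lim_seq_plus' _ _ _ _ H (is_lim_seq_const 1)).
  replace (Finite 1) with (Finite (c * 0 + 1)) by (f_equal; ring).
  apply (is_lim_seq_ext_loc _ _ _) with (2 := H1).
  exists 1%nat; intros n Hn; assert (0 < INR n) by (apply lt_0_INR; lia).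
  field; lra.
Qed.

Lemma is_lim_seq_Rpower_INR_p_infty c : 1 <= c -> is_lim_seq (fun n => Rpower (INR n) c) p_infty.
Proof.
  intros Hc; apply is_lim_seq_le_p_loc with (u := INR); [|apply is_lim_seq_INR].
  exists 1%nat; intros n Hn.
  assert (1 <= INR n) by (apply (le_INR 1); lia).
  rewrite <- (Rpower_1 (INR n)) at 1 by lra; apply Rle_Rpower; lra.
Qed.

Lemma eventually_pos_of_lim_1 (w f : nat -> R) : (forall n, 0 < w n) ->
  is_lim_seq (fun n => w n * f n) 1 -> exists N, forall n, (N <= n)%nat -> 0 < f n.
Proof.
  intros Hw Hl; apply is_lim_seq_spec in Hl.
  destruct (Hl (mkposreal (/ 2) ltac:(lra))) as [N HN]; simpl in HN.
  exists N; intros n Hn; specialize (HN n Hn); specialize (Hw n).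
  apply Rabs_def2 in HN; destruct (Rlt_or_le 0 (f n)); [assumption | nra].
Qed.

Section Corollary4.

Variables (V : nat -> R) (a : R) (psim psi : nat -> R).
Hypothesis a_gt0 : 0 < a.
Hypothesis psim_sol : is_solution V psim.
Hypothesis psi_sol : is_solution V psi.
Hypothesis psim_asym : is_lim_seq (fun n => Rpower (INR n) a * psim n) 1.

Let W := wronskian psim psi 0.
Let b := 2 * a + 1.

Lemma b_gt1 : 1 <= b.
Proof. unfold b; lra. Qed.

Lemma psim_eventually_pos : exists N, (1 <= N)%nat /\ forall n, (N <= n)%nat -> 0 < psim n.
Proof.
  destruct (eventually_pos_of_lim_1 _ _ (fun n => exp_pos _) psim_asym) as [N HN].
  exists (Nat.max N 1); split; [lia | intros n Hn; apply HN; lia].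
Qed.

Lemma increment_quotient_limit :
  is_lim_seq (fun n => (psi (S n) / psim (S n) - psi n / psim n) /
                       (Rpower (INR (S n)) b - Rpower (INR n) b)) (- W / b).
Proof.
  destruct psim_eventually_pos as [N0 [HN01 HN0]].
  set (X := fun n => Rpower (INR n) a * psim n).
  set (E := fun n => Rpower (1 + / INR n) a).
  set (D := fun n => INR n * (Rpower (1 + / INR n) b - 1)).
  (* (n+1)^a = n^a E_n and (n+1)^b - n^b = n^(2a) D_n, so the quotient is
     -W / (X_n X_(n+1) D_n / E_n). *)
  assert (Hden : is_lim_seq (fun n => X n * X (S n) / E n * D n) b).
  { replace (Finite b) with (Finite (1 * 1 / 1 * b)) by (f_equal; field).
    apply is_lim_seq_mult'; [apply is_lim_seq_div'; [apply is_lim_seq_mult'|..]|].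
    - exact psim_asym.
    - exact (proj1 (is_lim_seq_incr_1 X 1) psim_asym).
    - apply is_lim_seq_Rpower_1_plus_inv.
    - lra.
    - apply is_lim_seq_Rpower_diff_quot. }
  assert (Hq := is_lim_seq_div' _ _ _ _ (is_lim_seq_const (- W)) Hden
                  ltac:(pose proof b_gt1; lra)).
  apply (is_lim_seq_ext_loc _ _ _) with (2 := Hq).
  exists N0; intros n Hn.
  assert (Hn1 : (1 <= n)%nat) by lia.
  assert (Hpn : 0 < INR n) by (apply lt_0_INR; lia).
  assert (0 < / INR n) by (apply Rinv_0_lt_compat; lra).
  assert (Hm1 : 0 < psim n) by auto. assert (Hm2 : 0 < psim (S n)) by auto.
  assert (HD : Rpower (1 + / INR n) 0 < Rpower (1 + / INR n) b)
    by (apply Rpower_lt; pose proof b_gt1; lra).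
  rewrite Rpower_O in HD by lra.
  assert (0 < Rpower (INR n) a) by apply exp_pos.
  assert (0 < Rpower (1 + / INR n) a) by apply exp_pos.
  unfold X, E, D; rewrite (Rpower_INR_S n a Hn1), (Rpower_INR_S n b Hn1).
  replace (Rpower (INR n) b) with (Rpower (INR n) a * Rpower (INR n) a * INR n)
    by (symmetry; apply Rpower_double_plus_1; lra).
  unfold W; rewrite <- (wronskian_const V psim psi psim_sol psi_sol n); unfold wronskian.
  assert (0 < Rpower (INR n) a * Rpower (INR n) a * INR n * (Rpower (1 + / INR n) b - 1))
    by (repeat apply Rmult_lt_0_compat; lra).
  field; repeat split; lra.
Qed.

Lemma quotient_asymptotics :
  is_lim_seq (fun n => psi n / psim n / Rpower (INR n) b) (- W / b).
Proof.
  destruct psim_eventually_pos as [N0 [HN01 _]].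
  apply (stolz_cesaro (fun n => psi n / psim n) (fun n => Rpower (INR n) b) _ N0).
  - intros n Hn; apply Rlt_Rpower_l; [pose proof b_gt1; lra|].
    split; [apply lt_0_INR; lia | rewrite S_INR; lra].
  - apply is_lim_seq_Rpower_INR_p_infty, b_gt1.
  - apply increment_quotient_limit.
Qed.

Lemma product_over_n_limit : is_lim_seq (fun n => psim n * psi n / INR n) (- W / b).
Proof.
  destruct psim_eventually_pos as [N0 [HN01 HN0]].
  replace (Finite (- W / b)) with (Finite (1 * 1 * (- W / b))) by (f_equal; ring).
  apply (is_lim_seq_ext_loc _ _ _) with
    (2 := is_lim_seq_mult' _ _ _ _ (is_lim_seq_mult' _ _ _ _ psim_asym psim_asym)
                           quotient_asymptotics).
  exists N0; intros n Hn.
  assert (Hpn : 0 < INR n) by (apply lt_0_INR; lia).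
  assert (0 < psim n) by auto.
  assert (0 < Rpower (INR n) a) by apply exp_pos.
  unfold b; rewrite (Rpower_double_plus_1 (INR n) a Hpn).
  field; lra.
Qed.

End Corollary4.

Theorem corollary4 (V : nat -> R) (a : R) (psim : nat -> R) :
  0 < a ->
  is_solution V psim ->
  is_lim_seq (fun n => Rpower (INR n) a * psim n) 1 ->
  forall psi : nat -> R,
    is_solution V psi ->
    lin_indep psim psi ->
    exists C : R, 0 < C /\
      is_lim_seq (fun n => Rabs (psim n * psi n) / (C * INR n)) 1.
Proof.
  intros Ha Hm Hasym psi Hp Hli.
  pose proof (wronskian_neq0 V psim psi Hm Hp Hli) as HW.
  assert (HWpos : 0 < Rabs (wronskian psim psi 0)) by (apply Rabs_pos_lt, HW).
  exists (Rabs (wronskian psim psi 0) / (2 * a + 1)).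
  split; [apply Rdiv_lt_0_compat; lra|].
  assert (Hlim := is_lim_seq_abs _ _ (product_over_n_limit V a psim psi Ha Hm Hp Hasym)).
  simpl in Hlim; rewrite Rabs_div, Rabs_Ropp, (Rabs_right (2 * a + 1)) in Hlim by lra.
  assert (Hc := is_lim_seq_scal_r _ (/ (Rabs (wronskian psim psi 0) / (2 * a + 1))) _ Hlim).
  simpl in Hc; rewrite Rinv_r in Hc by (apply Rgt_not_eq, Rdiv_lt_0_compat; lra).
  apply (is_lim_seq_ext_loc _ _ _) with (2 := Hc).
  exists 1%nat; intros n Hn.
  assert (Hpn : 0 < INR n) by (apply lt_0_INR; lia).
  rewrite Rabs_div, (Rabs_right (INR n)) by lra.
  field; lra.
Qed.
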